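(* Let $\Lambda$ be a finite, strongly connected $k$-graph, $y$ an $\mathbb{R}_+$-functor on $\Lambda$ and $\theta\in(0,\infty)$, such that condition (w-I) holds if $|\Lambda^0|=1$ and condition (w-II) holds otherwise. Define $d_{y,\theta}$ on $\Lambda^\infty\cong X_{\mathcal{B}_\Lambda}$ by $d_{y,\theta}(x,z)=1$ if $r(x)\ne r(z)$, $d_{y,\theta}(x,x)=0$, and $d_{y,\theta}(x,z)=w_{y,\theta}(x\wedge z)$ otherwise (equivalently $d_{y,\theta}(x,z)=\inf\{w_{y,\theta}(\lambda):\lambda\in F\mathcal{B}_\Lambda,\ x,z\in Z(\lambda)\}$ when $r(x)=r(z)$). Then $d_{y,\theta}$ is an ultrametric on $\Lambda^\infty$, and the topology it induces is the cylinder set topology.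
   Context: A $k$-graph is a countable small category $\Lambda$ with a degree functor $d:\Lambda\to\mathbb{N}^k$ satisfying unique factorization: if $d(\lambda)=m+n$ there are unique $\eta,\nu$ with $\lambda=\eta\nu$, $d(\eta)=m$, $d(\nu)=n$. $\Lambda^n=d^{-1}(n)$, $\Lambda^0$ = vertices, $r,s$ range/source, $v\Lambda^nw$ paths of degree $n$ from $w$ to $v$; $e_i$ standard basis; finite: each $\Lambda^n$ finite; strongly connected: $v\Lambda w\ne\emptyset$ for all vertices. An $\mathbb{R}_+$-functor is $y:\Lambda\to[0,\infty)$ with $y(v)=0$ on vertices and $y(\lambda\nu)=y(\lambda)+y(\nu)$ when $s(\lambda)=r(\nu)$. $B_i(y,\theta)_{v,w}=\sum_{\lambda\in v\Lambda^{e_i}w}e^{-\theta y(\lambda)}$; unique $\xi^{y,\theta}\in(0,\infty)^{\Lambda^0}$ with $\sum_v\xi^{y,\theta}_v=1$ and $B_i(y,\theta)\xi^{y,\theta}=\rho(B_i(y,\theta))\xi^{y,\theta}$ for all $i$ ($\rho$ = spectral radius); $\rho(B(y,\theta))^m=\prod_i\rho(B_i(y,\theta))^{m_i}$. Condition (w-I): $\rho(B_i(y,\theta))>1$ for all $i$. Condition (w-II): there is $i$ with $\rho(B_i(y,\theta))>\max_{v,w}B_i(y,\theta)_{v,w}$. Stationary $k$-Bratteli diagram $\mathcal{B}_\Lambda$: vertex sets $\mathcal{V}_n=\Lambda^0$; for $n\ge1$, $n\equiv i\pmod k$, $i\in\{1,\dots,k\}$, edge set $\mathcal{E}_n$ with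 one edge from $q\in\mathcal{V}_n$ to $p\in\mathcal{V}_{n-1}$ per $\lambda\in p\Lambda^{e_i}q$. Finite paths $f_1\cdots f_n$ ($f_j\in\mathcal{E}_j$, $s(f_j)=r(f_{j+1})$; length 0 = vertices of $\mathcal{V}_0$) form $F\mathcal{B}_\Lambda$ and are identified with morphisms $f_1\cdots f_n\in\Lambda$; infinite paths $f_1f_2\cdots$ form $X_{\mathcal{B}_\Lambda}$, with cylinder sets $Z(\lambda)$ (infinite paths with initial segment $\lambda$) generating the cylinder set topology; $r(x)=r(f_1)\in\mathcal{V}_0$. For $x\ne z$ with $r(x)=r(z)$, $x\wedge z$ is their longest common initial segment. $X_{\mathcal{B}_\Lambda}$ is naturally homeomorphic to the infinite path space $\Lambda^\infty$ (degree-preserving functors from $\Omega_k$ into $\Lambda$, topologized by cylinder sets), compatibly with cylinder sets. $w_{y,\theta}(\lambda)=e^{-y(\lambda)}\big(\rho(B(y,\theta))^{-d(\lambda)}\xi^{y,\theta}_{s(\lambda)}\big)^{1/\theta}$ for $\lambda\in F\mathcal{B}_\Lambda$. A metric $d$ is an ultrametric if $d(x,z)\le\max\{d(x,u),d(u,z)\}$ for all $x,z,u$. *)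

From Stdlib Require Import Reals List Arith Classical ClassicalEpsilon.
Import ListNotations.
Open Scope R_scope.


(* ---------- degrees: elements of N^k as nat -> nat supported on [0,k) ---------- *)
Definition supported (k : nat) (m : nat -> nat) : Prop := forall i, (k <= i)%nat -> m i = 0%nat.
Definition deg_eq (m n : nat -> nat) : Prop := forall i, m i = n i.
Definition deg_add (m n : nat -> nat) : nat -> nat := fun i => (m i + n i)%nat.
Definition deg_zero : nat -> nat := fun _ => 0%nat.
(* standard basis vector e_i (0-based colours i = 0, ..., k-1) *)
Definition e_ (i : nat) : nat -> nat := fun j => if Nat.eqb j i then 1%nat else 0%nat.

Record kgraph (k : nat) := {
  kg_obj : Type;
  kg_mor : Type;
  kg_r : kg_mor -> kg_obj;
  kg_s : kg_mor -> kg_obj;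
  kg_id : kg_obj -> kg_mor;
  (* kg_comp a b = the composite "a b" (meaningful when s a = r b) *)
  kg_comp : kg_mor -> kg_mor -> kg_mor;
  kg_d : kg_mor -> nat -> nat;
  kg_r_id : forall v, kg_r (kg_id v) = v;
  kg_s_id : forall v, kg_s (kg_id v) = v;
  kg_r_comp : forall a b, kg_s a = kg_r b -> kg_r (kg_comp a b) = kg_r a;
  kg_s_comp : forall a b, kg_s a = kg_r b -> kg_s (kg_comp a b) = kg_s b;
  kg_id_l : forall a, kg_comp (kg_id (kg_r a)) a = a;
  kg_id_r : forall a, kg_comp a (kg_id (kg_s a)) = a;
  kg_assoc : forall a b c, kg_s a = kg_r b -> kg_s b = kg_r c ->
      kg_comp a (kg_comp b c) = kg_comp (kg_comp a b) c;
  kg_d_supp : forall a, supported k (kg_d a);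
  kg_d_id : forall v, deg_eq (kg_d (kg_id v)) deg_zero;
  kg_d_comp : forall a b, kg_s a = kg_r b ->
      deg_eq (kg_d (kg_comp a b)) (deg_add (kg_d a) (kg_d b));
  kg_fact : forall (l : kg_mor) (m n : nat -> nat),
      supported k m -> supported k n -> deg_eq (kg_d l) (deg_add m n) ->
      exists e, (kg_s (fst e) = kg_r (snd e) /\ l = kg_comp (fst e) (snd e) /\
                 deg_eq (kg_d (fst e)) m /\ deg_eq (kg_d (snd e)) n) /\
        forall e', (kg_s (fst e') = kg_r (snd e') /\ l = kg_comp (fst e') (snd e') /\
                 deg_eq (kg_d (fst e')) m /\ deg_eq (kg_d (snd e')) n) -> e' = e
}.

Arguments kg_obj {k}. Arguments kg_mor {k}. Arguments kg_r {k}. Arguments kg_s {k}.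
Arguments kg_id {k}. Arguments kg_comp {k}. Arguments kg_d {k}.

(* A finite k-graph: every Lambda^n is finite, witnessed by an enumeration
   without repetitions (this also gives countability). *)
Record finite_kgraph (k : nat) := {
  fkg :> kgraph k;
  fkg_enum : (nat -> nat) -> list (kg_mor fkg);
  fkg_enum_nodup : forall n, NoDup (fkg_enum n);
  fkg_enum_spec : forall n l, In l (fkg_enum n) <-> deg_eq (kg_d fkg l) n
}.
Arguments fkg {k}. Arguments fkg_enum {k}.

Definition strongly_connected {k} (G : kgraph k) : Prop :=
  forall v w : kg_obj G, exists l, kg_r G l = v /\ kg_s G l = w.

Definition num_vertices {k} (G : finite_kgraph k) : nat := length (fkg_enum G deg_zero).
Definition verts {k} (G : finite_kgraph k) : list (kg_obj G) :=
  map (kg_r G) (fkg_enum G deg_zero).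

Definition Rplus_functor {k} (G : kgraph k) (y : kg_mor G -> R) : Prop :=
  (forall l, 0 <= y l) /\ (forall v, y (kg_id G v) = 0) /\
  (forall a b, kg_s G a = kg_r G b -> y (kg_comp G a b) = y a + y b).

Definition lsum {A} (f : A -> R) (l : list A) : R := fold_right (fun a acc => f a + acc) 0 l.

Definition ind (P : Prop) : R := if excluded_middle_informative P then 1 else 0.

Definition Bmat {k} (G : finite_kgraph k) (y : kg_mor G -> R) (theta : R) (i : nat)
  (v w : kg_obj G) : R :=
  lsum (fun l => ind (kg_r G l = v /\ kg_s G l = w) * exp (- theta * y l)) (fkg_enum G (e_ i)).

Definition mat_vec {k} (G : finite_kgraph k) (B : kg_obj G -> kg_obj G -> R)
  (u : kg_obj G -> R) (p : kg_obj G) : R := lsum (fun q => B p q * u q) (verts G).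

(* a + b i is a (complex) eigenvalue of the real matrix B:
   B (u + i v) = (a + b i)(u + i v) for some nonzero complex vector u + i v *)
Definition complex_eigenvalue {k} (G : finite_kgraph k) (B : kg_obj G -> kg_obj G -> R)
  (a b : R) : Prop :=
  exists u v : kg_obj G -> R,
    (exists q, u q <> 0 \/ v q <> 0) /\
    (forall p, mat_vec G B u p = a * u p - b * v p) /\
    (forall p, mat_vec G B v p = b * u p + a * v p).

Definition is_spectral_radius {k} (G : finite_kgraph k) (B : kg_obj G -> kg_obj G -> R)
  (rho : R) : Prop :=
  is_lub (fun t => exists a b, complex_eigenvalue G B a b /\ t = sqrt (a ^ 2 + b ^ 2)) rho.

(* An infinite path f_1 f_2 ... is stored 0-based: x j = f_{j+1} in E_{j+1},
   which corresponds to a morphism of degree e_i with i = j mod k (0-based colour). *)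
Definition is_inf_path {k} (G : kgraph k) (x : nat -> kg_mor G) : Prop :=
  forall j, deg_eq (kg_d G (x j)) (e_ (j mod k)) /\ kg_s G (x j) = kg_r G (x (S j)).

Definition InfPath {k} (G : kgraph k) := { x : nat -> kg_mor G | is_inf_path G x }.

Definition path_r {k} {G : kgraph k} (x : InfPath G) : kg_obj G := kg_r G (proj1_sig x 0%nat).

(* the finite path f_1 ... f_n, identified with the morphism f_1 f_2 ... f_n of Lambda;
   for n = 0 it is the vertex r(x) *)
Fixpoint prefix {k} (G : kgraph k) (x : nat -> kg_mor G) (n : nat) : kg_mor G :=
  match n with
  | O => kg_id G (kg_r G (x 0%nat))
  | S n' => kg_comp G (prefix G x n') (x n')
  end.

Fixpoint rho_pow_neg (rho : nat -> R) (m : nat -> nat) (k : nat) : R :=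
  match k with
  | O => 1
  | S k' => rho_pow_neg rho m k' * / (rho k' ^ m k')
  end.

Definition wyt {k} (G : kgraph k) (y : kg_mor G -> R) (theta : R) (rho : nat -> R)
  (xi : kg_obj G -> R) (l : kg_mor G) : R :=
  exp (- y l) * Rpower (rho_pow_neg rho (kg_d G l) k * xi (kg_s G l)) (/ theta).

Definition meet_len {k} {G : kgraph k} (x z : InfPath G) : nat :=
  epsilon (inhabits 0%nat)
    (fun n => (forall j, (j < n)%nat -> proj1_sig x j = proj1_sig z j) /\
              proj1_sig x n <> proj1_sig z n).

Definition dyt {k} (G : kgraph k) (y : kg_mor G -> R) (theta : R) (rho : nat -> R)
  (xi : kg_obj G -> R) (x z : InfPath G) : R :=
  if excluded_middle_informative (path_r x = path_r z) then
    if excluded_middle_informative (x = z) then 0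
    else wyt G y theta rho xi (prefix G (proj1_sig x) (meet_len x z))
  else 1.

Definition is_ultrametric {X : Type} (d : X -> X -> R) : Prop :=
  (forall x z, 0 <= d x z) /\
  (forall x z, d x z = 0 <-> x = z) /\
  (forall x z, d x z = d z x) /\
  (forall x z u, d x z <= Rmax (d x u) (d u z)).

Definition metric_open {X : Type} (d : X -> X -> R) (U : X -> Prop) : Prop :=
  forall x, U x -> exists eps, 0 < eps /\ forall z, d x z < eps -> U z.

(* finite paths of B_Lambda: a vertex v of V_0 together with edges f_1 ... f_n *)
Definition FinPath {k} (G : kgraph k) : Type := (kg_obj G * list (kg_mor G))%type.

Definition is_fin_path {k} (G : kgraph k) (p : FinPath G) : Prop :=
  (forall j f, nth_error (snd p) j = Some f -> deg_eq (kg_d G f) (e_ (j mod k))) /\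
  (forall f, nth_error (snd p) 0 = Some f -> kg_r G f = fst p) /\
  (forall j f g, nth_error (snd p) j = Some f -> nth_error (snd p) (S j) = Some g ->
     kg_s G f = kg_r G g).

Definition cylinder {k} {G : kgraph k} (p : FinPath G) (x : InfPath G) : Prop :=
  path_r x = fst p /\
  forall j, (j < length (snd p))%nat -> nth_error (snd p) j = Some (proj1_sig x j).

(* open sets of the topology generated by the cylinder sets (as subbasis) *)
Definition cylinder_open {k} {G : kgraph k} (U : InfPath G -> Prop) : Prop :=
  forall x, U x -> exists ps : list (FinPath G),
    Forall (fun p => is_fin_path G p /\ cylinder p x) ps /\
    forall z, Forall (fun p => cylinder p z) ps -> U z.

From Pilot Require Import Defs.
From Stdlib Require Import Reals List Arith Lia Lra Classical ClassicalEpsilon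
  ProofIrrelevance FunctionalExtensionality.
Import ListNotations.
Open Scope R_scope.

(* Write W(l) = w_{y,theta}(l)^theta = e^{-theta y(l)} rho^{-d(l)} xi_{s(l)}.  For an edge e of
   colour i the eigenvector equation gives e^{-theta y(e)} xi_{s(e)} <= (B_i xi)_{r(e)}
   = rho_i xi_{r(e)}, i.e. W(e) <= xi_{r(e)}; peeling off edges via unique factorisation,
   W(l) <= xi_{r(l)} <= 1 for every l.  Hence w decreases along every infinite path and is
   at most 1, which makes d(x, z) = w(x /\ z) an ultrametric.  Under (w-I) or (w-II) some
   colour i has e^{-theta y(e)} / rho_i <= c < 1 on all its edges, and the first Nk edges of
   a path contain N edges of colour i, so w(x_1 ... x_{Nk}) <= c^{N/theta} -> 0.  Thus every
   ball around x contains a cylinder Z(x_1 ... x_n) and conversely, so the topologies agree. *)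

Lemma exists_first_difference {A} (f g : nat -> A) j :
  f j <> g j -> exists n, (forall i, (i < n)%nat -> f i = g i) /\ f n <> g n.
Proof.
  induction j as [j IH] using (well_founded_induction lt_wf). intros Hj.
  destruct (classic (forall i, (i < j)%nat -> f i = g i)) as [Hagree|Hdiff].
  - exists j. split; assumption.
  - apply not_all_ex_not in Hdiff as [i Hi].
    apply imply_to_and in Hi as [Hij Hfg]. exact (IH i Hij Hfg).
Qed.

Fixpoint deg_size (m : nat -> nat) (k : nat) : nat :=
  match k with
  | O => O
  | S k' => (deg_size m k' + m k')%nat
  end.

Lemma deg_size_le (m' m : nat -> nat) k :
  (forall t, (t < k)%nat -> (m' t <= m t)%nat) -> (deg_size m' k <= deg_size m k)%nat.
Proof.
  induction k as [|k IH]; intros Hle; simpl; [lia|].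
  specialize (IH (fun t Ht => Hle t ltac:(lia))). specialize (Hle k ltac:(lia)). lia.
Qed.

Lemma deg_size_lt (m' m : nat -> nat) k j :
  (forall t, (t < k)%nat -> (m' t <= m t)%nat) -> (j < k)%nat -> (m' j < m j)%nat ->
  (deg_size m' k < deg_size m k)%nat.
Proof.
  induction k as [|k IH]; intros Hle Hj Hlt; simpl; [lia|].
  assert (Hk := Hle k ltac:(lia)).
  destruct (Nat.eq_dec j k) as [->|Hne].
  - pose proof (deg_size_le m' m k (fun t Ht => Hle t ltac:(lia))). lia.
  - specialize (IH (fun t Ht => Hle t ltac:(lia)) ltac:(lia) Hlt). lia.
Qed.

Lemma e_supported k i : (i < k)%nat -> supported k (e_ i).
Proof. intros Hi t Ht. unfold e_. destruct (Nat.eqb_spec t i); lia. Qed.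

Lemma rho_pow_neg_ext rho m n k :
  (forall j, (j < k)%nat -> m j = n j) -> rho_pow_neg rho m k = rho_pow_neg rho n k.
Proof.
  induction k as [|k IH]; intros H; simpl; [reflexivity|].
  rewrite IH by (intros; apply H; lia). rewrite H by lia. reflexivity.
Qed.

Lemma rho_pow_neg_zero rho k : rho_pow_neg rho deg_zero k = 1.
Proof.
  induction k as [|k IH]; simpl; [reflexivity|].
  rewrite IH. unfold deg_zero. simpl. rewrite Rinv_1. ring.
Qed.

Lemma rho_pow_neg_add rho m n k :
  rho_pow_neg rho (deg_add m n) k = rho_pow_neg rho m k * rho_pow_neg rho n k.
Proof.
  induction k as [|k IH]; simpl; [ring|].
  rewrite IH. unfold deg_add. rewrite pow_add, Rinv_mult. ring.
Qed.

Lemma rho_pow_neg_pos rho m k :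
  (forall j, (j < k)%nat -> 0 < rho j) -> 0 < rho_pow_neg rho m k.
Proof.
  induction k as [|k IH]; intros H; simpl; [lra|].
  apply Rmult_lt_0_compat; [apply IH; intros; apply H; lia|].
  apply Rinv_0_lt_compat, pow_lt, H. lia.
Qed.

Lemma rho_pow_neg_e rho i k : (i < k)%nat -> rho_pow_neg rho (e_ i) k = / rho i.
Proof.
  induction k as [|k IH]; intros Hi; [lia|]. simpl.
  destruct (Nat.eq_dec i k) as [->|Hne].
  - rewrite (rho_pow_neg_ext rho (e_ k) deg_zero), rho_pow_neg_zero.
    + unfold e_. rewrite Nat.eqb_refl. simpl. rewrite Rmult_1_r. ring.
    + intros j Hj. unfold e_, deg_zero. destruct (Nat.eqb_spec j k); lia.
  - rewrite IH by lia. unfold e_. destruct (Nat.eqb_spec k i); [lia|].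
    simpl. rewrite Rinv_1. ring.
Qed.

Lemma lsum_nonneg {A} (f : A -> R) l : (forall a, In a l -> 0 <= f a) -> 0 <= lsum f l.
Proof.
  induction l as [|b l IH]; intros H; simpl; [lra|].
  pose proof (H b (or_introl eq_refl)).
  pose proof (IH (fun a Ha => H a (or_intror Ha))). lra.
Qed.

Lemma lsum_ge {A} (f : A -> R) l a :
  (forall a, In a l -> 0 <= f a) -> In a l -> f a <= lsum f l.
Proof.
  induction l as [|b l IH]; intros H Ha; simpl; [destruct Ha|].
  pose proof (H b (or_introl eq_refl)).
  pose proof (lsum_nonneg f l (fun a Ha => H a (or_intror Ha))).
  destruct Ha as [->|Ha]; [lra|].
  pose proof (IH (fun a Ha => H a (or_intror Ha)) Ha). lra.
Qed.

Lemma strict_upper_bound (l : list R) a :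
  0 < a -> (forall b, In b l -> b < a) -> exists c, 0 <= c < a /\ forall b, In b l -> b <= c.
Proof.
  intros Ha. induction l as [|b l IH]; intros Hl.
  - exists 0. split; [lra|]. intros b [].
  - destruct (IH (fun b' Hb' => Hl b' (or_intror Hb'))) as [c [Hc Hbound]].
    exists (Rmax b c). split.
    + split; [apply (Rle_trans _ c); [lra|apply Rmax_r]|].
      apply Rmax_lub_lt; [apply Hl; left; reflexivity|lra].
    + intros b' [<-|Hb']; [apply Rmax_l|].
      apply (Rle_trans _ c); [apply Hbound, Hb'|apply Rmax_r].
Qed.

Section KGraph.

Variables (k : nat) (G : kgraph k).

Lemma deg_zero_id (l : kg_mor G) : deg_eq (kg_d G l) deg_zero -> l = kg_id G (kg_r G l).
Proof.
  intros Hl.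
  assert (Hsupp : supported k deg_zero) by (intros i _; reflexivity).
  destruct (kg_fact k G l deg_zero deg_zero Hsupp Hsupp) as [e [_ Huniq]].
  { intros i. rewrite Hl. reflexivity. }
  assert (Hright : (l, kg_id G (kg_s G l)) = e).
  { apply Huniq. simpl. rewrite kg_r_id, kg_id_r. repeat split; [exact Hl|apply kg_d_id]. }
  assert (Hleft : (kg_id G (kg_r G l), l) = e).
  { apply Huniq. simpl. rewrite kg_s_id, kg_id_l. repeat split; [apply kg_d_id|exact Hl]. }
  rewrite <- Hleft in Hright. injection Hright as H _. exact H.
Qed.

Lemma kg_split (l : kg_mor G) (m : nat -> nat) :
  supported k m -> (forall t, (m t <= kg_d G l t)%nat) ->
  exists a b, kg_s G a = kg_r G b /\ l = kg_comp G a b /\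
    deg_eq (kg_d G a) m /\ deg_eq (kg_d G b) (fun t => kg_d G l t - m t)%nat.
Proof.
  intros Hm Hle.
  destruct (kg_fact k G l m (fun t => kg_d G l t - m t)%nat Hm) as [[a b] [Hab _]].
  - intros t Ht. rewrite (kg_d_supp k G l t Ht). reflexivity.
  - intros t. unfold deg_add. specialize (Hle t). lia.
  - exists a, b. exact Hab.
Qed.

Lemma prefix_s x : is_inf_path G x -> forall n, kg_s G (prefix G x n) = kg_r G (x n).
Proof.
  intros hx n. induction n as [|n IH]; simpl.
  - apply kg_s_id.
  - rewrite kg_s_comp by exact IH. apply (proj2 (hx n)).
Qed.

Lemma prefix_ext x z n :
  kg_r G (x 0%nat) = kg_r G (z 0%nat) -> (forall j, (j < n)%nat -> x j = z j) ->
  prefix G x n = prefix G z n.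
Proof.
  intros Hr H. induction n as [|n IH]; simpl.
  - rewrite Hr. reflexivity.
  - rewrite IH by (intros; apply H; lia). rewrite H by lia. reflexivity.
Qed.

(* The edges x_{Nk}, ..., x_{Nk+r-1} have the colours 0, ..., r-1. *)
Lemma prefix_deg_round x (hx : is_inf_path G x) N r j : (r <= k)%nat -> (j < k)%nat ->
  kg_d G (prefix G x (N * k + r)) j =
  (kg_d G (prefix G x (N * k)) j + if Nat.ltb j r then 1 else 0)%nat.
Proof.
  intros Hr Hj. induction r as [|r IH].
  - rewrite Nat.add_0_r. simpl. lia.
  - replace (N * k + S r)%nat with (S (N * k + r)) by lia. simpl prefix.
    rewrite kg_d_comp by (apply prefix_s; exact hx). unfold deg_add.
    rewrite IH by lia. rewrite (proj1 (hx _)).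
    replace ((N * k + r) mod k)%nat with r
      by (rewrite Nat.add_comm, Nat.Div0.mod_add, Nat.mod_small; lia).
    unfold e_. destruct (Nat.eqb_spec j r), (Nat.ltb_spec j r), (Nat.ltb_spec j (S r)); lia.
Qed.

Lemma prefix_deg_rounds x (hx : is_inf_path G x) N j :
  (j < k)%nat -> kg_d G (prefix G x (N * k)) j = N.
Proof.
  intros Hj. induction N as [|N IH].
  - simpl. apply kg_d_id.
  - replace (S N * k)%nat with (N * k + k)%nat by lia.
    rewrite prefix_deg_round, IH by (assumption || lia).
    destruct (Nat.ltb_spec j k); lia.
Qed.

Definition agree_below (x z : InfPath G) (n : nat) : Prop :=
  forall j, (j < n)%nat -> proj1_sig x j = proj1_sig z j.

Lemma inf_path_eq (x z : InfPath G) : proj1_sig x = proj1_sig z -> x = z.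
Proof.
  destruct x as [x hx], z as [z hz]. simpl. intros ->. f_equal. apply proof_irrelevance.
Qed.

Lemma meet_len_spec (x z : InfPath G) : x <> z ->
  agree_below x z (meet_len x z) /\ proj1_sig x (meet_len x z) <> proj1_sig z (meet_len x z).
Proof.
  intros Hne. unfold meet_len. apply epsilon_spec.
  destruct (classic (exists j, proj1_sig x j <> proj1_sig z j)) as [[j Hj]|Hall].
  - exact (exists_first_difference _ _ j Hj).
  - exfalso. apply Hne, inf_path_eq, functional_extensionality. intros j.
    apply NNPP. intros Hj. apply Hall. exists j. exact Hj.
Qed.

Lemma agree_below_meet_len (x z : InfPath G) n :
  x <> z -> agree_below x z n -> (n <= meet_len x z)%nat.
Proof.
  intros Hne Hagree. destruct (meet_len_spec x z Hne) as [_ Hdiff].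
  destruct (le_lt_dec n (meet_len x z)) as [Hle|Hlt]; [exact Hle|].
  exfalso. exact (Hdiff (Hagree _ Hlt)).
Qed.

Lemma meet_len_sym (x z : InfPath G) : x <> z -> meet_len x z = meet_len z x.
Proof.
  intros Hne. assert (Hne' : z <> x) by congruence.
  destruct (meet_len_spec x z Hne) as [Hxz _], (meet_len_spec z x Hne') as [Hzx _].
  apply Nat.le_antisymm; apply agree_below_meet_len; try assumption; intros j Hj.
  - symmetry. exact (Hxz j Hj).
  - symmetry. exact (Hzx j Hj).
Qed.

Definition initial_segment (x : InfPath G) (n : nat) : FinPath G :=
  (path_r x, map (proj1_sig x) (seq 0 n)).

Lemma nth_error_initial_segment (x : InfPath G) n j :
  nth_error (snd (initial_segment x n)) j =
  if Nat.ltb j n then Some (proj1_sig x j) else None.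
Proof.
  simpl. rewrite nth_error_map, nth_error_seq. destruct (Nat.ltb j n); reflexivity.
Qed.

Lemma initial_segment_fin_path (x : InfPath G) n : is_fin_path G (initial_segment x n).
Proof.
  split; [|split].
  - intros j f Hf. rewrite nth_error_initial_segment in Hf.
    destruct (Nat.ltb j n); [|discriminate]. injection Hf as <-.
    apply (proj1 (proj2_sig x j)).
  - intros f Hf. rewrite nth_error_initial_segment in Hf.
    destruct (Nat.ltb 0 n); [|discriminate]. injection Hf as <-. reflexivity.
  - intros j f g Hf Hg. rewrite nth_error_initial_segment in Hf, Hg.
    destruct (Nat.ltb j n), (Nat.ltb (S j) n); try discriminate.
    injection Hf as <-. injection Hg as <-. apply (proj2 (proj2_sig x j)).
Qed.

Lemma cylinder_initial_segment (x z : InfPath G) n :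
  cylinder (initial_segment x n) z <-> path_r z = path_r x /\ agree_below x z n.
Proof.
  unfold cylinder, agree_below.
  replace (length (snd (initial_segment x n))) with n
    by (simpl; rewrite length_map, length_seq; reflexivity).
  split; intros [Hr Hagree]; split; try exact Hr; intros j Hj; specialize (Hagree j Hj);
    rewrite nth_error_initial_segment in *; destruct (Nat.ltb_spec j n); try lia.
  - injection Hagree. auto.
  - rewrite Hagree. reflexivity.
Qed.

Lemma cylinder_agree (p : FinPath G) (x z : InfPath G) :
  cylinder p x -> path_r x = path_r z -> agree_below x z (length (snd p)) -> cylinder p z.
Proof.
  intros [Hr Hx] Hxz Hagree. split; [congruence|].
  intros j Hj. rewrite <- Hagree by exact Hj. exact (Hx j Hj).
Qed.

End KGraph.

Section Weights.

Variables (k : nat) (G : finite_kgraph k) (y : kg_mor G -> R) (theta : R) (rho : nat -> R)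
  (xi : kg_obj G -> R).

Hypotheses (hk : (1 <= k)%nat) (hy : Rplus_functor G y) (htheta : 0 < theta)
  (hxi_pos : forall v, 0 < xi v) (hxi_sum : lsum xi (verts G) = 1)
  (hxi_eig : forall i, (i < k)%nat ->
     forall v, mat_vec G (Bmat G y theta i) xi v = rho i * xi v).

Definition mass_factor (l : kg_mor G) : R := exp (- theta * y l) * rho_pow_neg rho (kg_d G l) k.

(* [cyl_mass l] is the quantity W(l) = w_{y,theta}(l)^theta; see [wyt_eq_Rpower]. *)
Definition cyl_mass (l : kg_mor G) : R := mass_factor l * xi (kg_s G l).

Lemma mass_factor_comp a b : kg_s G a = kg_r G b ->
  mass_factor (kg_comp G a b) = mass_factor a * mass_factor b.
Proof.
  intros Hab. unfold mass_factor. destruct hy as [_ [_ hy_comp]].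
  rewrite hy_comp by exact Hab.
  rewrite (rho_pow_neg_ext rho _ (deg_add (kg_d G a) (kg_d G b)))
    by (intros; apply kg_d_comp; exact Hab).
  rewrite rho_pow_neg_add, Rmult_plus_distr_l, exp_plus. ring.
Qed.

Lemma cyl_mass_comp a b : kg_s G a = kg_r G b ->
  cyl_mass (kg_comp G a b) = mass_factor a * cyl_mass b.
Proof.
  intros Hab. unfold cyl_mass. rewrite mass_factor_comp, kg_s_comp by exact Hab. ring.
Qed.

Lemma mass_factor_pos (hr : forall j, (j < k)%nat -> 0 < rho j) l : 0 < mass_factor l.
Proof. apply Rmult_lt_0_compat; [apply exp_pos|apply rho_pow_neg_pos, hr]. Qed.

Lemma cyl_mass_pos (hr : forall j, (j < k)%nat -> 0 < rho j) l : 0 < cyl_mass l.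
Proof. apply Rmult_lt_0_compat; [apply mass_factor_pos, hr|apply hxi_pos]. Qed.

Lemma mass_factor_edge e i : (i < k)%nat -> deg_eq (kg_d G e) (e_ i) ->
  mass_factor e = exp (- theta * y e) * / rho i.
Proof.
  intros Hi He. unfold mass_factor.
  rewrite (rho_pow_neg_ext rho _ (e_ i)), rho_pow_neg_e by (intros; apply He || exact Hi).
  reflexivity.
Qed.

Lemma exp_neg_y_le_1 l : exp (- theta * y l) <= 1.
Proof.
  rewrite <- exp_0. destruct hy as [hy_nonneg _]. specialize (hy_nonneg l).
  destruct (Req_dec (y l) 0) as [->|Hne].
  - rewrite Rmult_0_r. lra.
  - left. apply exp_increasing. nra.
Qed.

Lemma in_verts v : In v (verts G).
Proof.
  apply in_map_iff. exists (kg_id G v). split; [apply kg_r_id|].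
  apply fkg_enum_spec, kg_d_id.
Qed.

Lemma xi_le_1 v : xi v <= 1.
Proof. rewrite <- hxi_sum. apply lsum_ge; [intros; left; apply hxi_pos|apply in_verts]. Qed.

Lemma Bmat_ge_edge e i : deg_eq (kg_d G e) (e_ i) ->
  exp (- theta * y e) <= Bmat G y theta i (kg_r G e) (kg_s G e).
Proof.
  intros He. unfold Bmat.
  set (f l := Defs.ind (kg_r G l = kg_r G e /\ kg_s G l = kg_s G e) * exp (- theta * y l)).
  assert (Hf : forall l, 0 <= f l).
  { intros l. unfold f, Defs.ind. destruct (excluded_middle_informative _);
      pose proof (exp_pos (- theta * y l)); lra. }
  replace (exp (- theta * y e)) with (f e).
  - apply lsum_ge; [intros; apply Hf|apply fkg_enum_spec, He].
  - unfold f, Defs.ind. destruct (excluded_middle_informative _) as [_|Hn]; [ring|].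
    exfalso. apply Hn. split; reflexivity.
Qed.

Lemma edge_eigen_bound e i : (i < k)%nat -> deg_eq (kg_d G e) (e_ i) ->
  exp (- theta * y e) * xi (kg_s G e) <= rho i * xi (kg_r G e).
Proof.
  intros Hi He. rewrite <- hxi_eig by exact Hi. unfold mat_vec.
  assert (HB : forall q, 0 <= Bmat G y theta i (kg_r G e) q * xi q).
  { intros q. apply Rmult_le_pos; [|left; apply hxi_pos].
    apply lsum_nonneg. intros l _. unfold Defs.ind.
    destruct (excluded_middle_informative _); pose proof (exp_pos (- theta * y l)); lra. }
  apply (Rle_trans _ (Bmat G y theta i (kg_r G e) (kg_s G e) * xi (kg_s G e))).
  - apply Rmult_le_compat_r; [left; apply hxi_pos|apply Bmat_ge_edge, He].
  - apply (lsum_ge (fun q => Bmat G y theta i (kg_r G e) q * xi q));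
      [intros; apply HB|apply in_verts].
Qed.

Lemma rho_pos_of_edge e i : (i < k)%nat -> deg_eq (kg_d G e) (e_ i) -> 0 < rho i.
Proof.
  intros Hi He. pose proof (edge_eigen_bound e i Hi He).
  pose proof (exp_pos (- theta * y e)). pose proof (hxi_pos (kg_s G e)).
  pose proof (hxi_pos (kg_r G e)). nra.
Qed.

Lemma rho_pos_of_path x : is_inf_path G x -> forall j, (j < k)%nat -> 0 < rho j.
Proof.
  intros hx j Hj. apply (rho_pos_of_edge (x j) j Hj).
  pose proof (proj1 (hx j)) as Hd. rewrite Nat.mod_small in Hd by exact Hj. exact Hd.
Qed.

Lemma cyl_mass_edge_le e i : (i < k)%nat -> deg_eq (kg_d G e) (e_ i) ->
  cyl_mass e <= xi (kg_r G e).
Proof.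
  intros Hi He. pose proof (rho_pos_of_edge e i Hi He).
  pose proof (edge_eigen_bound e i Hi He).
  unfold cyl_mass. rewrite (mass_factor_edge e i Hi He).
  apply (Rmult_le_reg_l (rho i)); [assumption|].
  replace (rho i * (exp (- theta * y e) * / rho i * xi (kg_s G e)))
    with (exp (- theta * y e) * xi (kg_s G e)) by (field; lra).
  assumption.
Qed.

Lemma cyl_mass_deg_zero_le l : deg_eq (kg_d G l) deg_zero -> cyl_mass l <= xi (kg_r G l).
Proof.
  intros Hl0. pose proof (deg_zero_id k G l Hl0) as Hid.
  assert (Hs : kg_s G l = kg_r G l) by (rewrite Hid at 1; apply kg_s_id).
  unfold cyl_mass, mass_factor. rewrite Hs.
  rewrite (rho_pow_neg_ext rho _ deg_zero), rho_pow_neg_zero by (intros; apply Hl0).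
  pose proof (exp_neg_y_le_1 l). pose proof (hxi_pos (kg_r G l)). nra.
Qed.

Lemma cyl_mass_le_xi l : cyl_mass l <= xi (kg_r G l).
Proof.
  remember (deg_size (kg_d G l) k) as n eqn:Hn. revert l Hn.
  induction n as [n IH] using (well_founded_induction lt_wf). intros l Hn.
  destruct (classic (exists j, (j < k)%nat /\ (0 < kg_d G l j)%nat)) as [[j [Hj Hdj]]|Hnone].
  - destruct (kg_split k G l (e_ j) (e_supported k j Hj)) as [e [l' [Hc [-> [He Hl']]]]].
    { intros t. unfold e_. destruct (Nat.eqb_spec t j) as [->|]; lia. }
    assert (Hsize : (deg_size (kg_d G l') k < n)%nat).
    { subst n. apply (deg_size_lt _ _ k j); [intros t _|exact Hj|]; rewrite Hl'; [lia|].
      unfold e_. rewrite Nat.eqb_refl. lia. }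
    pose proof (IH _ Hsize l' eq_refl) as Hl'_le.
    pose proof (cyl_mass_edge_le e j Hj He).
    pose proof (rho_pos_of_edge e j Hj He).
    assert (0 <= mass_factor e)
      by (rewrite (mass_factor_edge e j Hj He); pose proof (exp_pos (- theta * y e));
          left; apply Rmult_lt_0_compat; [|apply Rinv_0_lt_compat]; assumption).
    rewrite cyl_mass_comp, kg_r_comp by exact Hc. unfold cyl_mass in *.
    rewrite <- Hc in Hl'_le.
    apply (Rle_trans _ (mass_factor e * xi (kg_s G e))); [|assumption].
    apply Rmult_le_compat_l; assumption.
  - apply cyl_mass_deg_zero_le. intros t. unfold deg_zero.
    destruct (lt_dec t k) as [Ht|Ht].
    + destruct (Nat.eq_dec (kg_d G l t) 0); [assumption|].
      exfalso. apply Hnone. exists t. split; [assumption|lia].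
    + apply (kg_d_supp k G l t). lia.
Qed.

Lemma cyl_mass_prefix_antitone x (hx : is_inf_path G x) n m : (n <= m)%nat ->
  cyl_mass (prefix G x m) <= cyl_mass (prefix G x n).
Proof.
  intros Hnm. induction Hnm as [|m _ IH]; [lra|].
  apply (Rle_trans _ (cyl_mass (prefix G x m))); [|exact IH]. simpl prefix.
  rewrite cyl_mass_comp by (apply prefix_s; exact hx).
  unfold cyl_mass at 2. rewrite prefix_s by exact hx.
  apply Rmult_le_compat_l; [left; apply mass_factor_pos, (rho_pos_of_path x hx)|].
  apply (cyl_mass_edge_le _ (m mod k)); [apply Nat.mod_upper_bound; lia|apply (proj1 (hx m))].
Qed.

Definition contraction_condition : Prop :=
  if Nat.eqb (num_vertices G) 1
  then (forall i, (i < k)%nat -> 1 < rho i)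
  else (exists i, (i < k)%nat /\ forall v w, Bmat G y theta i v w < rho i).

Lemma contracting_colour (hr : forall j, (j < k)%nat -> 0 < rho j) :
  contraction_condition ->
  exists i c, (i < k)%nat /\ 0 <= c < 1 /\
    forall e, deg_eq (kg_d G e) (e_ i) -> mass_factor e <= c.
Proof.
  unfold contraction_condition. destruct (Nat.eqb (num_vertices G) 1); intros hcond.
  - assert (Hk0 : (0 < k)%nat) by lia. pose proof (hcond 0%nat Hk0).
    pose proof (Rinv_0_lt_compat (rho 0%nat) ltac:(lra)).
    exists 0%nat, (/ rho 0%nat). split; [exact Hk0|]. split.
    + split; [lra|]. rewrite <- Rinv_1. apply Rinv_lt_contravar; lra.
    + intros e He. rewrite (mass_factor_edge e 0 Hk0 He).
      pose proof (exp_neg_y_le_1 e). nra.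
  - destruct hcond as [i [Hi HB]]. pose proof (hr i Hi).
    destruct (strict_upper_bound (map (fun e => exp (- theta * y e)) (fkg_enum G (e_ i))) (rho i))
      as [c [Hc Hbound]]; [assumption| |].
    { intros b Hb. apply in_map_iff in Hb as [e [<- He]]. apply fkg_enum_spec in He.
      apply (Rle_lt_trans _ _ _ (Bmat_ge_edge e i He)), HB. }
    exists i, (c / rho i). split; [exact Hi|]. split.
    + split; [apply Rmult_le_pos; [lra|left; apply Rinv_0_lt_compat; lra]|].
      apply (Rmult_lt_reg_r (rho i)); [lra|]. unfold Rdiv. rewrite Rmult_assoc, Rinv_l by lra. lra.
    + intros e He. rewrite (mass_factor_edge e i Hi He).
      apply Rmult_le_compat_r; [left; apply Rinv_0_lt_compat; lra|].
      apply Hbound, (in_map (fun e => exp (- theta * y e))), fkg_enum_spec, He.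
Qed.

Lemma mass_factor_colour_power (hr : forall j, (j < k)%nat -> 0 < rho j) i c :
  (i < k)%nat -> (forall e, deg_eq (kg_d G e) (e_ i) -> mass_factor e <= c) ->
  forall N mu, deg_eq (kg_d G mu) (fun t => N * e_ i t)%nat -> mass_factor mu <= c ^ N.
Proof.
  intros Hi Hbound N. induction N as [|N IH]; intros mu Hmu.
  - unfold mass_factor. rewrite (rho_pow_neg_ext rho _ deg_zero), rho_pow_neg_zero
      by (intros t _; rewrite Hmu; reflexivity).
    simpl. rewrite Rmult_1_r. apply exp_neg_y_le_1.
  - destruct (kg_split k G mu (e_ i) (e_supported k i Hi)) as [e [mu' [Hc [-> [He Hmu']]]]].
    { intros t. rewrite Hmu. unfold e_. destruct (Nat.eqb t i); lia. }
    rewrite mass_factor_comp by exact Hc. simpl pow.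
    pose proof (mass_factor_pos hr e). pose proof (mass_factor_pos hr mu').
    apply Rmult_le_compat; [lra|lra|apply Hbound, He|apply IH].
    intros t. rewrite Hmu', Hmu. unfold e_. destruct (Nat.eqb t i); lia.
Qed.

(* The first N rounds of k edges contain N edges of colour i. *)
Lemma cyl_mass_rounds_le x (hx : is_inf_path G x) i c :
  (i < k)%nat -> 0 <= c -> (forall e, deg_eq (kg_d G e) (e_ i) -> mass_factor e <= c) ->
  forall N, cyl_mass (prefix G x (N * k)) <= c ^ N.
Proof.
  intros Hi Hc Hbound N. pose proof (rho_pos_of_path x hx) as hr.
  assert (Hsupp : supported k (fun t => N * e_ i t)%nat).
  { intros t Ht. rewrite (e_supported k i Hi t Ht). lia. }
  destruct (kg_split k G (prefix G x (N * k)) _ Hsupp) as [mu [nu [Hmn [-> [Hmu _]]]]].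
  { intros t. unfold e_. destruct (Nat.eqb_spec t i) as [->|]; [|lia].
    rewrite prefix_deg_rounds by assumption. lia. }
  rewrite cyl_mass_comp by exact Hmn.
  pose proof (mass_factor_colour_power hr i c Hi Hbound N mu Hmu).
  pose proof (cyl_mass_le_xi nu). pose proof (xi_le_1 (kg_r G nu)).
  pose proof (mass_factor_pos hr mu). pose proof (cyl_mass_pos hr nu).
  rewrite <- (Rmult_1_r (c ^ N)). apply Rmult_le_compat; lra.
Qed.

Lemma wyt_eq_Rpower (hr : forall j, (j < k)%nat -> 0 < rho j) l :
  wyt G y theta rho xi l = Rpower (cyl_mass l) (/ theta).
Proof.
  unfold wyt, cyl_mass, mass_factor.
  rewrite Rmult_assoc, <- (Rpower_mult_distr (exp (- theta * y l))).
  - f_equal. unfold Rpower. rewrite ln_exp. f_equal. field. lra.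
  - apply exp_pos.
  - apply Rmult_lt_0_compat; [apply rho_pow_neg_pos, hr|apply hxi_pos].
Qed.

Local Notation w := (wyt G y theta rho xi).
Local Notation d := (dyt G y theta rho xi).

Lemma wyt_pos l : 0 < w l.
Proof. apply Rmult_lt_0_compat; apply exp_pos. Qed.

Lemma wyt_prefix_antitone (x : InfPath G) n m : (n <= m)%nat ->
  w (prefix G (proj1_sig x) m) <= w (prefix G (proj1_sig x) n).
Proof.
  intros Hnm. destruct x as [x hx]. simpl. pose proof (rho_pos_of_path x hx) as hr.
  rewrite !(wyt_eq_Rpower hr).
  apply Rle_Rpower_l; [left; apply Rinv_0_lt_compat, htheta|].
  split; [apply cyl_mass_pos, hr|apply cyl_mass_prefix_antitone; assumption].
Qed.

Lemma wyt_prefix_le_1 (x : InfPath G) n : w (prefix G (proj1_sig x) n) <= 1.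
Proof.
  destruct x as [x hx]. simpl. pose proof (rho_pos_of_path x hx) as hr.
  assert (Hone : Rpower 1 (/ theta) = 1)
    by (unfold Rpower; rewrite ln_1, Rmult_0_r; apply exp_0).
  rewrite (wyt_eq_Rpower hr), <- Hone.
  apply Rle_Rpower_l; [left; apply Rinv_0_lt_compat, htheta|].
  split; [apply cyl_mass_pos, hr|].
  apply (Rle_trans _ _ _ (cyl_mass_le_xi _)), xi_le_1.
Qed.

Lemma wyt_prefix_vanishes (hcond : contraction_condition) (x : InfPath G) eps :
  0 < eps -> exists n, w (prefix G (proj1_sig x) n) < eps.
Proof.
  intros Heps. destruct x as [x hx]. simpl. pose proof (rho_pos_of_path x hx) as hr.
  destruct (contracting_colour hr hcond) as [i [c [Hi [Hc Hbound]]]].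
  destruct (pow_lt_1_zero c ltac:(rewrite Rabs_pos_eq; lra) (Rpower eps theta) (exp_pos _))
    as [N HN].
  specialize (HN N (le_n N)). rewrite Rabs_pos_eq in HN by (apply pow_le; lra).
  exists (N * k)%nat. rewrite (wyt_eq_Rpower hr).
  assert (Hroot : Rpower (Rpower eps theta) (/ theta) = eps)
    by (rewrite Rpower_mult, Rinv_r, Rpower_1 by lra; reflexivity).
  rewrite <- Hroot.
  apply Rlt_Rpower_l; [apply Rinv_0_lt_compat, htheta|].
  split; [apply cyl_mass_pos, hr|].
  apply (Rle_lt_trans _ _ _ (cyl_mass_rounds_le x hx i c Hi (proj1 Hc) Hbound N)), HN.
Qed.


Lemma dyt_diff_range x z : path_r x <> path_r z -> d x z = 1.
Proof.
  intros Hr. unfold dyt. destruct (excluded_middle_informative _); [contradiction|reflexivity].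
Qed.

Lemma dyt_refl x : d x x = 0.
Proof.
  unfold dyt. destruct (excluded_middle_informative _) as [_|Hn]; [|contradiction (Hn eq_refl)].
  destruct (excluded_middle_informative _) as [_|Hn]; [reflexivity|contradiction (Hn eq_refl)].
Qed.

Lemma dyt_meet x z : path_r x = path_r z -> x <> z ->
  d x z = w (prefix G (proj1_sig x) (meet_len x z)).
Proof.
  intros Hr Hne. unfold dyt.
  destruct (excluded_middle_informative _); [|contradiction].
  destruct (excluded_middle_informative _); [contradiction|reflexivity].
Qed.

Lemma dyt_le_of_agree x z n : path_r x = path_r z -> agree_below k G x z n ->
  d x z <= w (prefix G (proj1_sig x) n).
Proof.
  intros Hr Hagree. destruct (classic (x = z)) as [<-|Hne].
  - rewrite dyt_refl. left. apply wyt_pos.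
  - rewrite dyt_meet by assumption.
    apply wyt_prefix_antitone, agree_below_meet_len; assumption.
Qed.

Lemma dyt_le_1 x z : d x z <= 1.
Proof.
  destruct (classic (path_r x = path_r z)) as [Hr|Hr]; [|rewrite dyt_diff_range by exact Hr; lra].
  apply (Rle_trans _ _ _ (dyt_le_of_agree x z 0 Hr (fun j Hj => False_ind _ (Nat.nlt_0_r j Hj)))).
  apply wyt_prefix_le_1.
Qed.

Lemma agree_of_dyt_lt x z n : d x z < w (prefix G (proj1_sig x) n) ->
  path_r x = path_r z /\ agree_below k G x z n.
Proof.
  intros Hlt. pose proof (wyt_prefix_le_1 x n).
  destruct (classic (path_r x = path_r z)) as [Hr|Hr];
    [|rewrite dyt_diff_range in Hlt by exact Hr; lra].
  split; [exact Hr|].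
  destruct (classic (x = z)) as [<-|Hne]; [intros j _; reflexivity|].
  destruct (meet_len_spec k G x z Hne) as [Hagree _].
  destruct (le_lt_dec n (meet_len x z)) as [Hle|Hgt].
  - intros j Hj. apply Hagree. lia.
  - rewrite dyt_meet in Hlt by assumption.
    pose proof (wyt_prefix_antitone x _ _ (Nat.lt_le_incl _ _ Hgt)). lra.
Qed.

Lemma dyt_sym x z : d x z = d z x.
Proof.
  destruct (classic (path_r x = path_r z)) as [Hr|Hr];
    [|rewrite !dyt_diff_range by congruence; reflexivity].
  destruct (classic (x = z)) as [<-|Hne]; [reflexivity|].
  rewrite !dyt_meet, (meet_len_sym k G z x) by congruence.
  f_equal. apply prefix_ext; [exact Hr|]. apply (meet_len_spec k G x z Hne).
Qed.

(* If x and u split at a and u and z at b, then x and z agree below min(a, b). *)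
Lemma dyt_ultra x z u : d x z <= Rmax (d x u) (d u z).
Proof.
  pose proof (Rmax_l (d x u) (d u z)). pose proof (Rmax_r (d x u) (d u z)).
  pose proof (dyt_le_1 x z).
  destruct (classic (path_r x = path_r u)) as [Hxu|Hxu];
    [|rewrite (dyt_diff_range x u Hxu) in *; lra].
  destruct (classic (path_r u = path_r z)) as [Huz|Huz];
    [|rewrite (dyt_diff_range u z Huz) in *; lra].
  destruct (classic (x = u)) as [<-|Hne_xu]; [lra|].
  destruct (classic (u = z)) as [<-|Hne_uz]; [lra|].
  destruct (meet_len_spec k G x u Hne_xu) as [Hagree_xu _].
  destruct (meet_len_spec k G u z Hne_uz) as [Hagree_uz _].
  destruct (le_lt_dec (meet_len x u) (meet_len u z)) as [Hle|Hlt].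
  - apply (Rle_trans _ (d x u)); [|assumption].
    rewrite (dyt_meet x u) by assumption.
    apply dyt_le_of_agree; [congruence|].
    intros j Hj. rewrite Hagree_xu by exact Hj. apply Hagree_uz. lia.
  - apply (Rle_trans _ (d u z)); [|assumption].
    rewrite (dyt_meet u z) by assumption.
    rewrite <- (prefix_ext k G (proj1_sig x) (proj1_sig u) (meet_len u z) Hxu)
      by (intros j Hj; apply Hagree_xu; lia).
    apply dyt_le_of_agree; [congruence|].
    intros j Hj. rewrite Hagree_xu by lia. apply Hagree_uz, Hj.
Qed.

Lemma dyt_is_ultrametric : is_ultrametric d.
Proof.
  split; [|split; [|split; [exact dyt_sym|exact dyt_ultra]]].
  - intros x z. destruct (classic (path_r x = path_r z)) as [Hr|Hr];
      [|rewrite dyt_diff_range by exact Hr; lra].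
    destruct (classic (x = z)) as [<-|Hne]; [rewrite dyt_refl; lra|].
    rewrite dyt_meet by assumption. left. apply wyt_pos.
  - intros x z. split; [|intros <-; apply dyt_refl].
    intros H0. apply NNPP. intros Hne.
    destruct (classic (path_r x = path_r z)) as [Hr|Hr].
    + rewrite dyt_meet in H0 by assumption.
      pose proof (wyt_pos (prefix G (proj1_sig x) (meet_len x z))). lra.
    + rewrite dyt_diff_range in H0 by exact Hr. lra.
Qed.

Lemma metric_open_cylinder_open (hcond : contraction_condition) U :
  metric_open d U -> cylinder_open U.
Proof.
  intros hU x Ux. destruct (hU x Ux) as [eps [Heps Hball]].
  destruct (wyt_prefix_vanishes hcond x eps Heps) as [n Hn].
  exists [initial_segment k G x n]. split.
  - constructor; [split|constructor].
    + apply initial_segment_fin_path.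
    + apply cylinder_initial_segment. split; [reflexivity|intros j _; reflexivity].
  - intros z Hz. inversion Hz as [|? ? Hxz].
    apply cylinder_initial_segment in Hxz as [Hr Hagree].
    apply Hball, (Rle_lt_trans _ _ _ (dyt_le_of_agree x z n (eq_sym Hr) Hagree) Hn).
Qed.

Lemma cylinder_open_metric_open U : cylinder_open U -> metric_open d U.
Proof.
  intros hU x Ux. destruct (hU x Ux) as [ps [Hps HU]].
  set (L := list_max (map (fun p : FinPath G => length (snd p)) ps)).
  exists (w (prefix G (proj1_sig x) L)). split; [apply wyt_pos|].
  intros z Hz. apply HU. apply agree_of_dyt_lt in Hz as [Hr Hagree].
  rewrite Forall_forall in Hps |- *. intros p Hp. destruct (Hps p Hp) as [_ Hpx].
  apply (cylinder_agree k G p x z Hpx Hr). intros j Hj. apply Hagree.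
  pose proof (proj1 (list_max_le _ L) (le_n L)) as HL. rewrite Forall_forall in HL.
  specialize (HL _ (in_map (fun p : FinPath G => length (snd p)) _ _ Hp)). lia.
Qed.

End Weights.

Theorem proposition6p9 (k : nat) (hk : (1 <= k)%nat) (G : finite_kgraph k)
  (hsc : strongly_connected G)
  (y : kg_mor G -> R) (hy : Rplus_functor G y)
  (theta : R) (htheta : 0 < theta)
  (rho : nat -> R)
  (hrho : forall i, (i < k)%nat -> is_spectral_radius G (Bmat G y theta i) (rho i))
  (xi : kg_obj G -> R)
  (hxi_pos : forall v, 0 < xi v)
  (hxi_sum : lsum xi (verts G) = 1)
  (hxi_eig : forall i, (i < k)%nat ->
     forall v, mat_vec G (Bmat G y theta i) xi v = rho i * xi v)
  (hcond : if Nat.eqb (num_vertices G) 1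
           then (forall i, (i < k)%nat -> 1 < rho i)
           else (exists i, (i < k)%nat /\
                  forall v w, Bmat G y theta i v w < rho i)) :
  is_ultrametric (dyt G y theta rho xi) /\
  (forall U : InfPath G -> Prop,
     metric_open (dyt G y theta rho xi) U <-> cylinder_open U).
Proof.
  split; [|intros U; split];
    [apply dyt_is_ultrametric|apply metric_open_cylinder_open|apply cylinder_open_metric_open];
    assumption.
Qed.
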